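(* Let $\Gamma$ be a finite subset of ${\sf Frm}$ and $A\in{\sf Frm}$. Then the following are equivalent: (i) $\vdash_{\sf WF_{N_2}}\bigwedge\Gamma\rightarrow A$; (ii) $\Gamma\Rightarrow A$ is derivable in ${\sf GWF_{N_2}}$; (iii) $\Gamma\Rightarrow A$ is derivable in ${\sf GWF^s_{N_2}}$.
   Context: Language: countably many atoms $p,q,\dots$, the constant $\bot$, and binary connectives $\wedge,\vee,\rightarrow$ ($\rightarrow$ is strict implication). ${\sf Frm}$ is the set of formulas built from atoms and $\bot$ with $\wedge,\vee,\rightarrow$; $A,B,C,D$ range over ${\sf Frm}$. Let $\supset$ be a new binary symbol (material implication) and ${\sf Frm_1}={\sf Frm}\cup\{A\supset B : A,B\in{\sf Frm}\}$ (no nesting of $\supset$). ${\sf Frm_2}$ is the smallest set containing ${\sf Frm_1}$ and closed under $\wedge$ and $\vee$; $X,Y,Z$ range over ${\sf Frm_2}$. Multi-succedent sequents are $\Gamma\Rightarrow\Delta$ with $\Gamma,\Delta$ finite multisets of ${\sf Frm_2}$-formulas. The calculus ${\sf GWF_{N_2}}$ has initial sequents $(id)$ $p,\Gamma\Rightarrow\Delta,p$ ($p$ an atom) and $(L_\bot)$ $\bot,\Gamma\Rightarrow\Delta$, and rules (premises / conclusion): $(L_\wedge)$ $X,Y,\Gamma\Rightarrow\Delta$ / $X\wedge Y,\Gamma\Rightarrow\Delta$; $(R_\wedge)$ $\Gamma\Rightarrow\Delta,X$ and $\Gamma\Rightarrow\Delta,Y$ / $\Gamma\Rightarrow\Delta,X\wedge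 Y$; $(L_\vee)$ $X,\Gamma\Rightarrow\Delta$ and $Y,\Gamma\Rightarrow\Delta$ / $X\vee Y,\Gamma\Rightarrow\Delta$; $(R_\vee)$ $\Gamma\Rightarrow\Delta,X,Y$ / $\Gamma\Rightarrow\Delta,X\vee Y$; $(L_\supset)$ $\Gamma\Rightarrow\Delta,A$ and $B,\Gamma\Rightarrow\Delta$ / $A\supset B,\Gamma\Rightarrow\Delta$; $(R_\supset)$ $A,\Gamma\Rightarrow\Delta,B$ / $\Gamma\Rightarrow\Delta,A\supset B$; $(LR_\rightarrow)$ $C\supset D,A\Rightarrow B$ / $\Gamma,C\rightarrow D\Rightarrow\Delta,A\rightarrow B$; $(R_\rightarrow)$ $A\Rightarrow B$ / $\Gamma\Rightarrow\Delta,A\rightarrow B$. The single-succedent calculus ${\sf GWF^s_{N_2}}$ (sequents $\Gamma\Rightarrow Z$, $Z\in{\sf Frm_2}$) has initial sequents $(id^s)$ $p,\Gamma\Rightarrow p$ and $(L^s_\bot)$ $\bot,\Gamma\Rightarrow Z$, and rules: $(L^s_\wedge)$ $X,Y,\Gamma\Rightarrow Z$ / $X\wedge Y,\Gamma\Rightarrow Z$; $(R^s_\wedge)$ $\Gamma\Rightarrow X$ and $\Gamma\Rightarrow Y$ / $\Gamma\Rightarrow X\wedge Y$; $(L^s_\vee)$ $X,\Gamma\Rightarrow Z$ and $Y,\Gamma\Rightarrow Z$ / $X\vee Y,\Gamma\Rightarrow Z$; $(R^s_{\vee_l})$ $\Gamma\Rightarrow X$ / $\Gamma\Rightarrow X\vee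 Y$; $(R^s_{\vee_r})$ $\Gamma\Rightarrow Y$ / $\Gamma\Rightarrow X\vee Y$; $(L^s_\supset)$ $A\supset B,\Gamma\Rightarrow A$ and $B,\Gamma\Rightarrow Z$ / $A\supset B,\Gamma\Rightarrow Z$; $(R^s_\supset)$ $A,\Gamma\Rightarrow B$ / $\Gamma\Rightarrow A\supset B$; $(LR^s_\rightarrow)$ $C\supset D,A\Rightarrow B$ / $\Gamma,C\rightarrow D\Rightarrow A\rightarrow B$; $(R^s_\rightarrow)$ $A\Rightarrow B$ / $\Gamma\Rightarrow A\rightarrow B$. In all rules $A,B,C,D\in{\sf Frm}$, $X,Y,Z\in{\sf Frm_2}$, $\Gamma,\Delta$ arbitrary finite multisets of ${\sf Frm_2}$-formulas. The Hilbert system ${\sf WF_{N_2}}$ over ${\sf Frm}$ has axiom schemes $A\rightarrow(A\vee B)$; $B\rightarrow(A\vee B)$; $(A\wedge B)\rightarrow A$; $(A\wedge B)\rightarrow B$; $A\wedge(B\vee C)\rightarrow(A\wedge B)\vee(A\wedge C)$; $A\rightarrow A$; $\bot\rightarrow A$; and rules (from theorems to a theorem): from $A$ and $A\rightarrow B$ infer $B$; from $A$ infer $B\rightarrow A$; from $A\rightarrow B$ and $B\rightarrow C$ infer $A\rightarrow C$; from $A\rightarrow B$ and $A\rightarrow C$ infer $A\rightarrow(B\wedge C)$; from $A\rightarrow C$ and $B\rightarrow C$ infer $(A\vee B)\rightarrow C$; from $A$ and $B$ infer $A\wedge B$; (${\sf N_2}$) from $C\rightarrow A\vee D$ and $C\wedge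 B\rightarrow D$ infer $(A\rightarrow B)\rightarrow(C\rightarrow D)$. $\vdash_{\sf WF_{N_2}}A$ means $A$ is a theorem of this system. $\bigwedge\Gamma$ is the conjunction of the members of $\Gamma$ (the empty conjunction read as $\top:=\bot\rightarrow\bot$). *)

From Stdlib Require Import List Permutation.
Import ListNotations.

(* One syntax for Frm2; Frm and Frm2 are carved out by predicates so that
   Frm is literally a subset of Frm2 (as in the paper). *)
Inductive form : Type :=
| Atom : nat -> form
| Bot : form
| And : form -> form -> form
| Or : form -> form -> form
| Imp : form -> form -> form      (* strict implication  -> *)
| MImp : form -> form -> form.    (* material implication  ⊃ *)

Fixpoint is_frm (A : form) : Prop :=
  match A with
  | Atom _ | Bot => True
  | And A B | Or A B | Imp A B => is_frm A /\ is_frm B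
  | MImp _ _ => False
  end.

Fixpoint is_frm2 (X : form) : Prop :=
  match X with
  | Atom _ | Bot => True
  | And X Y | Or X Y => is_frm2 X /\ is_frm2 Y
  | Imp A B | MImp A B => is_frm A /\ is_frm B
  end.

Definition Top : form := Imp Bot Bot.

Fixpoint bigAnd (l : list form) : form :=
  match l with
  | [] => Top
  | [A] => A
  | A :: l' => And A (bigAnd l')
  end.

Inductive WF : form -> Prop :=
| ax_or1 A B : is_frm A -> is_frm B -> WF (Imp A (Or A B))
| ax_or2 A B : is_frm A -> is_frm B -> WF (Imp B (Or A B))
| ax_and1 A B : is_frm A -> is_frm B -> WF (Imp (And A B) A)
| ax_and2 A B : is_frm A -> is_frm B -> WF (Imp (And A B) B)
| ax_dist A B C : is_frm A -> is_frm B -> is_frm C ->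
    WF (Imp (And A (Or B C)) (Or (And A B) (And A C)))
| ax_id A : is_frm A -> WF (Imp A A)
| ax_bot A : is_frm A -> WF (Imp Bot A)
| r_mp A B : WF A -> WF (Imp A B) -> WF B
| r_k A B : is_frm B -> WF A -> WF (Imp B A)
| r_trans A B C : WF (Imp A B) -> WF (Imp B C) -> WF (Imp A C)
| r_andI A B C : WF (Imp A B) -> WF (Imp A C) -> WF (Imp A (And B C))
| r_orE A B C : WF (Imp A C) -> WF (Imp B C) -> WF (Imp (Or A B) C)
| r_adj A B : WF A -> WF B -> WF (And A B)
| r_N2 A B C D : WF (Imp C (Or A D)) -> WF (Imp (And C B) D) ->
    WF (Imp (Imp A B) (Imp C D)).

Definition wfseq (G D : list form) : Prop := Forall is_frm2 G /\ Forall is_frm2 D.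

(* Multisets are represented by lists; derivability is closed under
   permutation of either side (exchange), so that derivability of a list
   sequent is exactly derivability of its underlying multiset sequent. *)
Inductive GWF : list form -> list form -> Prop :=
| g_perm G D G' D' : GWF G D -> Permutation G G' -> Permutation D D' -> GWF G' D'
| g_id p G D : wfseq G D -> GWF (Atom p :: G) (Atom p :: D)
| g_bot G D : wfseq G D -> GWF (Bot :: G) D
| g_Land X Y G D : wfseq (And X Y :: G) D ->
    GWF (X :: Y :: G) D -> GWF (And X Y :: G) D
| g_Rand X Y G D : wfseq G (And X Y :: D) ->
    GWF G (X :: D) -> GWF G (Y :: D) -> GWF G (And X Y :: D)
| g_Lor X Y G D : wfseq (Or X Y :: G) D ->
    GWF (X :: G) D -> GWF (Y :: G) D -> GWF (Or X Y :: G) D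
| g_Ror X Y G D : wfseq G (Or X Y :: D) ->
    GWF G (X :: Y :: D) -> GWF G (Or X Y :: D)
| g_Lmimp A B G D : wfseq (MImp A B :: G) D ->
    GWF G (A :: D) -> GWF (B :: G) D -> GWF (MImp A B :: G) D
| g_Rmimp A B G D : wfseq G (MImp A B :: D) ->
    GWF (A :: G) (B :: D) -> GWF G (MImp A B :: D)
| g_LRimp A B C D G Dl : wfseq (Imp C D :: G) (Imp A B :: Dl) ->
    GWF [MImp C D; A] [B] -> GWF (Imp C D :: G) (Imp A B :: Dl)
| g_Rimp A B G D : wfseq G (Imp A B :: D) ->
    GWF [A] [B] -> GWF G (Imp A B :: D).

Definition wfseqs (G : list form) (Z : form) : Prop := Forall is_frm2 G /\ is_frm2 Z.

Inductive GWFs : list form -> form -> Prop :=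
| s_perm G G' Z : GWFs G Z -> Permutation G G' -> GWFs G' Z
| s_id p G : wfseqs G (Atom p) -> GWFs (Atom p :: G) (Atom p)
| s_bot G Z : wfseqs G Z -> GWFs (Bot :: G) Z
| s_Land X Y G Z : wfseqs (And X Y :: G) Z ->
    GWFs (X :: Y :: G) Z -> GWFs (And X Y :: G) Z
| s_Rand X Y G : wfseqs G (And X Y) ->
    GWFs G X -> GWFs G Y -> GWFs G (And X Y)
| s_Lor X Y G Z : wfseqs (Or X Y :: G) Z ->
    GWFs (X :: G) Z -> GWFs (Y :: G) Z -> GWFs (Or X Y :: G) Z
| s_Rorl X Y G : wfseqs G (Or X Y) -> GWFs G X -> GWFs G (Or X Y)
| s_Rorr X Y G : wfseqs G (Or X Y) -> GWFs G Y -> GWFs G (Or X Y)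
| s_Lmimp A B G Z : wfseqs (MImp A B :: G) Z ->
    GWFs (MImp A B :: G) A -> GWFs (B :: G) Z -> GWFs (MImp A B :: G) Z
| s_Rmimp A B G : wfseqs G (MImp A B) ->
    GWFs (A :: G) B -> GWFs G (MImp A B)
| s_LRimp A B C D G : wfseqs (Imp C D :: G) (Imp A B) ->
    GWFs [MImp C D; A] B -> GWFs (Imp C D :: G) (Imp A B)
| s_Rimp A B G : wfseqs G (Imp A B) ->
    GWFs [A] B -> GWFs G (Imp A B).

(* The outer layer of Frm2 (atoms, bottom and strict implications combined by conjunction,
   disjunction and material implication) is classical, with strict implications behaving like
   atoms. Sequents are therefore read in valuations of atoms and strict implications, restricted
   so that the true strict implications of depth at most K are closed under the two implication
   rules of the calculus. Every rule is sound for this reading. Conversely, by induction on K: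
   invertible rules reduce a valid sequent to literals, and a valid literal sequent is an axiom
   or the conclusion of an implication rule, for otherwise the canonical valuation of its
   antecedent refutes it; that valuation respects the implication rules because of cut at smaller
   depth. The same canonical valuation gives completeness of the single-succedent calculus.
   Admissibility of cut and of the inversions then follows semantically, which makes every
   theorem of WF_N2 derivable. Conversely, a cut-free derivation of a Frm-sequent translates rule
   by rule into WF_N2, the implication rule LR-> becoming an instance of N2. *)

From Stdlib Require Import List Permutation Arith Lia Classical.
Import ListNotations.

Lemma frm_frm2 A : is_frm A -> is_frm2 A.
Proof. induction A; cbn; tauto. Qed.

Lemma Forall_frm_frm2 l : Forall is_frm l -> Forall is_frm2 l.
Proof. intro H; eapply Forall_impl; [exact frm_frm2 | exact H]. Qed.

Lemma Permutation_incl {T} (l l' : list T) : Permutation l l' -> incl l l'.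
Proof. intros P x; apply Permutation_in, P. Qed.

Lemma In_Permutation_cons {T} (x : T) l : In x l -> exists l0, Permutation (x :: l0) l.
Proof.
  intro H; apply in_split in H as (l1 & l2 & ->).
  exists (l1 ++ l2); apply Permutation_middle.
Qed.

Lemma pick_member {T} (P : T -> Prop) (l : list T) :
  (exists x l0, Permutation (x :: l0) l /\ P x) \/ Forall (fun x => ~ P x) l.
Proof.
  destruct (classic (exists x, In x l /\ P x)) as [[x [Hx HP]] | Hn].
  - left; destruct (In_Permutation_cons _ _ Hx) as [l0 P0]; eauto.
  - right; apply Forall_forall; intros x Hx HP; apply Hn; eauto.
Qed.

Fixpoint depth (x : form) : nat :=
  match x with
  | Atom _ | Bot => 0
  | And a b | Or a b | MImp a b => depth a + depth b
  | Imp a b => S (depth a + depth b)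
  end.

Notation bounded K l := (Forall (fun x => depth x <= K) l).

Fixpoint outer_size (x : form) : nat :=
  match x with
  | And a b | Or a b | MImp a b => S (outer_size a + outer_size b)
  | _ => 0
  end.

Definition weight (l : list form) : nat := list_sum (map outer_size l).

Lemma weight_cons x l : weight (x :: l) = outer_size x + weight l.
Proof. reflexivity. Qed.

Lemma weight_perm l l' : Permutation l l' -> weight l = weight l'.
Proof. intro P; apply Permutation_list_sum, Permutation_map, P. Qed.

Ltac weight_lia := rewrite !weight_cons; cbn [outer_size]; lia.

Definition max_depth (l : list form) : nat := list_max (map depth l).

Lemma max_depth_bounded l : bounded (max_depth l) l.
Proof. apply (Forall_map depth (fun k => k <= max_depth l)), list_max_le, le_n. Qed.

(** * Semantics *)

Fixpoint eval (v : form -> Prop) (x : form) : Prop :=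
  match x with
  | Atom p => v (Atom p)
  | Bot => False
  | And a b => eval v a /\ eval v b
  | Or a b => eval v a \/ eval v b
  | MImp a b => eval v a -> eval v b
  | Imp a b => v (Imp a b)
  end.

Ltac split_Forall :=
  repeat match goal with
  | H : Forall _ (_ :: _) |- _ => apply Forall_cons_iff in H as [? ?]
  | H : Forall _ (_ ++ _) |- _ => apply Forall_app in H as [? ?]
  | H : _ /\ _ |- _ => destruct H
  | H : _ |- _ => progress cbn [depth is_frm is_frm2 eval app] in H
  end.

Ltac solve_Forall :=
  split_Forall;
  repeat (cbn [depth is_frm is_frm2 eval app] in *;
          match goal with
          | |- Forall _ (_ :: _) => apply Forall_cons
          | |- Forall _ [] => apply Forall_nil
          | |- Forall _ (_ ++ _) => apply Forall_app
          | |- _ /\ _ => split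
          | |- wfseq _ _ => split
          | |- wfseqs _ _ => split
          end);
  cbn [depth is_frm is_frm2 eval app] in *; try assumption; try lia; try tauto; auto using frm_frm2.

(* Strict implications are interpreted by [v] itself; for those of depth at most [K], truth is
   closed under the rules R-> and LR->. *)
Definition respects (K : nat) (v : form -> Prop) : Prop :=
  (forall A B, depth (Imp A B) <= K -> GWF [A] [B] -> v (Imp A B)) /\
  (forall A B C D, depth (Imp A B) <= K -> depth (Imp C D) <= K ->
     GWF [MImp C D; A] [B] -> v (Imp C D) -> v (Imp A B)).

Definition entails (K : nat) (G D : list form) : Prop :=
  forall v, respects K v -> Forall (eval v) G -> Exists (eval v) D.

Lemma entails_incl K G D G' D' :
  entails K G D -> incl G G' -> incl D D' -> entails K G' D'.
Proof.
  intros E HG HD v Hv HG'. apply (incl_Exists HD), E, (incl_Forall HG), HG'; exact Hv.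
Qed.

Lemma entails_perm K G D G' D' :
  entails K G D -> Permutation G G' -> Permutation D D' -> entails K G' D'.
Proof. intros E P Q; apply (entails_incl _ _ _ _ _ E); apply Permutation_incl; assumption. Qed.

Lemma entails_single K G Z :
  entails K G [Z] <-> forall v, respects K v -> Forall (eval v) G -> eval v Z.
Proof.
  unfold entails; split; intros E v Hv HG; specialize (E v Hv HG).
  - apply Exists_cons in E as [E | E]; [exact E | inversion E].
  - apply Exists_cons; left; exact E.
Qed.

Lemma entails_and_l K X Y G D : entails K (And X Y :: G) D -> entails K (X :: Y :: G) D.
Proof. intros E v Hv H; split_Forall; apply (E v Hv); solve_Forall. Qed.

Lemma entails_or_l K X Y G D :
  entails K (Or X Y :: G) D -> entails K (X :: G) D /\ entails K (Y :: G) D.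
Proof. intro E; split; intros v Hv H; split_Forall; apply (E v Hv); solve_Forall. Qed.

Lemma entails_mimp_l K A B G D :
  entails K (MImp A B :: G) D -> entails K G (A :: D) /\ entails K (B :: G) D.
Proof.
  intro E; split; intros v Hv H; split_Forall.
  - destruct (classic (eval v A)) as [HA | HA]; [now left |].
    right; apply (E v Hv); solve_Forall.
  - apply (E v Hv); solve_Forall.
Qed.

Lemma entails_and_r K X Y G D :
  entails K G (And X Y :: D) -> entails K G (X :: D) /\ entails K G (Y :: D).
Proof.
  intro E; split; intros v Hv H; apply Exists_cons;
    destruct (proj1 (Exists_cons _ _ _) (E v Hv H)) as [[] | ]; auto.
Qed.

Lemma entails_or_r K X Y G D : entails K G (Or X Y :: D) -> entails K G (X :: Y :: D).
Proof.
  intros E v Hv H; rewrite !Exists_cons.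
  destruct (proj1 (Exists_cons _ _ _) (E v Hv H)) as [[] | ]; auto.
Qed.

Lemma entails_mimp_r K A B G D : entails K G (MImp A B :: D) -> entails K (A :: G) (B :: D).
Proof.
  intros E v Hv H; apply Forall_cons_iff in H as [HA HG]; apply Exists_cons.
  destruct (proj1 (Exists_cons _ _ _) (E v Hv HG)) as [HAB | ]; auto.
Qed.

(** * Soundness *)

Lemma wfseq_perm G D G' D' : wfseq G D -> Permutation G G' -> Permutation D D' -> wfseq G' D'.
Proof. intros [WG WD] P Q; split; [rewrite <- P | rewrite <- Q]; assumption. Qed.

Lemma GWF_wfseq G D : GWF G D -> wfseq G D.
Proof.
  induction 1; try assumption; [eapply wfseq_perm; eauto | ..];
    destruct H as [WG WD]; split; solve_Forall.
Qed.

Lemma GWF_entails K G D : GWF G D -> bounded K G -> bounded K D -> entails K G D.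
Proof.
  intros HD; induction HD; intros BG BD v Hv HG.
  - eapply entails_perm; [apply IHHD | ..]; eauto; [rewrite H | rewrite H0]; assumption.
  - split_Forall; now left.
  - split_Forall; contradiction.
  - apply IHHD; solve_Forall.
  - pose proof (IHHD1 BG ltac:(solve_Forall) v Hv HG) as EX.
    pose proof (IHHD2 BG ltac:(solve_Forall) v Hv HG) as EY.
    rewrite Exists_cons in *; cbn; tauto.
  - apply Forall_cons_iff in HG as [[HX | HY] HG]; [apply IHHD1 | apply IHHD2]; solve_Forall.
  - pose proof (IHHD BG ltac:(solve_Forall) v Hv HG) as E.
    rewrite !Exists_cons in *; cbn; tauto.
  - apply Forall_cons_iff in HG as [HAB HG].
    pose proof (IHHD1 ltac:(solve_Forall) ltac:(solve_Forall) v Hv HG) as E.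
    apply Exists_cons in E as [HA | HD']; [| assumption].
    apply IHHD2; solve_Forall.
  - destruct (classic (Exists (eval v) D)) as [HD' | HD']; [now right | left].
    intro HA. pose proof (IHHD ltac:(solve_Forall) ltac:(solve_Forall) v Hv ltac:(solve_Forall))
      as E.
    apply Exists_cons in E; tauto.
  - split_Forall; left. apply (proj2 Hv A B C D); assumption.
  - split_Forall; left. apply (proj1 Hv); assumption.
Qed.

(** * Completeness *)

Definition compound (x : form) : Prop :=
  match x with And _ _ | Or _ _ | MImp _ _ => True | _ => False end.

Lemma entails_mimp_cut K X Y A B H :
  entails K (H ++ [X]) [Y] -> entails K [MImp X Y; A] [B] -> entails K (H ++ [A]) [B].
Proof.
  rewrite !entails_single; intros EXY EB v Hv HA.
  apply Forall_app in HA as [HH HA].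
  apply (EB v Hv); solve_Forall. intro HX; apply (EXY v Hv), Forall_app; solve_Forall.
Qed.

Lemma GWF_bot_In G D : wfseq G D -> In Bot G -> GWF G D.
Proof.
  intros [WG WD] HG; destruct (In_Permutation_cons _ _ HG) as [G0 P]; rewrite <- P in WG.
  apply (g_perm (Bot :: G0) D); [apply g_bot; solve_Forall | exact P | reflexivity].
Qed.

Lemma GWF_id_In p G D : wfseq G D -> In (Atom p) G -> In (Atom p) D -> GWF G D.
Proof.
  intros [WG WD] HG HD.
  destruct (In_Permutation_cons _ _ HG) as [G0 P], (In_Permutation_cons _ _ HD) as [D0 Q].
  rewrite <- P in WG; rewrite <- Q in WD.
  apply (g_perm (Atom p :: G0) (Atom p :: D0)); [apply g_id; solve_Forall | exact P | exact Q].
Qed.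

Lemma GWF_Rimp_In A B G D : wfseq G D -> In (Imp A B) D -> GWF [A] [B] -> GWF G D.
Proof.
  intros [WG WD] HD H; destruct (In_Permutation_cons _ _ HD) as [D0 Q]; rewrite <- Q in WD.
  apply (g_perm G (Imp A B :: D0)); [apply g_Rimp; solve_Forall | reflexivity | exact Q].
Qed.

Lemma GWF_LRimp_In A B C E G D :
  wfseq G D -> In (Imp C E) G -> In (Imp A B) D -> GWF [MImp C E; A] [B] -> GWF G D.
Proof.
  intros [WG WD] HG HD H.
  destruct (In_Permutation_cons _ _ HG) as [G0 P], (In_Permutation_cons _ _ HD) as [D0 Q].
  rewrite <- P in WG; rewrite <- Q in WD.
  apply (g_perm (Imp C E :: G0) (Imp A B :: D0)); [apply g_LRimp; solve_Forall | exact P | exact Q].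
Qed.

Definition complete_for (K : nat) (G D : list form) : Prop :=
  wfseq G D -> bounded K G -> bounded K D -> entails K G D -> GWF G D.

Definition complete_at (K : nat) : Prop := forall G D, complete_for K G D.

Lemma complete_for_perm K G D G' D' :
  Permutation G G' -> Permutation D D' -> complete_for K G D -> complete_for K G' D'.
Proof.
  intros P Q C W BG BD E; apply (g_perm G D); [apply C | exact P | exact Q].
  - eapply wfseq_perm; [exact W | symmetry; exact P | symmetry; exact Q].
  - rewrite P; exact BG.
  - rewrite Q; exact BD.
  - eapply entails_perm; [exact E | symmetry; exact P | symmetry; exact Q].
Qed.

Definition canon (G : list form) (x : form) : Prop :=
  match x with
  | Atom p => In (Atom p) G
  | Imp A B => GWF [A] [B] \/ exists C E, In (Imp C E) G /\ GWF [MImp C E; A] [B]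
  | _ => False
  end.

Section Canonical.

Variable K : nat.
Hypothesis complete_below : forall K', K' < K -> complete_at K'.

Lemma canon_respects G : Forall is_frm2 G -> bounded K G -> respects K (canon G).
Proof.
  intros WG BG; split; [intros A B _ H; now left |].
  intros A B X Y HAB HXY H [HX | (C & E & HCE & HX)]; cbn in HAB, HXY.
  all: destruct (GWF_wfseq _ _ H) as [WXA WB]; split_Forall; cbn in *.
  - left. apply (complete_below (K - 1)); [lia | split | ..]; try solve_Forall.
    apply (entails_mimp_cut _ X Y A B []); apply GWF_entails; solve_Forall.
  - right; exists C, E; split; [exact HCE |].
    rewrite Forall_forall in WG, BG; specialize (WG _ HCE); specialize (BG _ HCE); cbn in *.
    apply (complete_below (K - 1)); [lia | split | ..]; try solve_Forall.
    apply (entails_mimp_cut _ X Y A B [MImp C E]); apply GWF_entails; solve_Forall.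
Qed.

Lemma canon_true G x :
  Forall is_frm2 G -> bounded K G -> In x G -> ~ compound x -> x <> Bot -> eval (canon G) x.
Proof.
  intros WG BG Hx Hc Hb; rewrite Forall_forall in WG, BG.
  destruct x as [p | | | | C E |]; cbn in *; try tauto.
  right; exists C, E; split; [exact Hx |].
  specialize (WG _ Hx); specialize (BG _ Hx); cbn in *.
  apply (complete_below (K - 1)); [lia | split | ..]; try solve_Forall.
  apply entails_single; intros v _ Hv; solve_Forall.
Qed.

Lemma complete_literal G D :
  Forall (fun x => ~ compound x) G -> Forall (fun x => ~ compound x) D -> complete_for K G D.
Proof.
  intros LG LD W BG BD E; rewrite Forall_forall in LG, LD.
  destruct (pick_member (fun x => ~ eval (canon G) x) G) as [(x & G0 & P & Hx) | HG].
  - assert (HxG : In x G) by (eapply Permutation_in; [exact P | now left]).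
    destruct (classic (x = Bot)) as [-> | Hb]; [now apply GWF_bot_In |].
    exfalso; apply Hx, canon_true; auto; apply W.
  - assert (Htrue : Forall (eval (canon G)) G).
    { eapply Forall_impl; [| exact HG]; intros x; apply NNPP. }
    pose proof (E _ (canon_respects G (proj1 W) BG) Htrue) as (y & Hy & Ey)%Exists_exists.
    destruct y as [p | | | | A B |]; cbn in Ey; try contradiction;
      try (exfalso; apply (LD _ Hy); exact I).
    + apply (GWF_id_In p); assumption.
    + destruct Ey as [HAB | (C & E' & HCE & HAB)];
        [apply (GWF_Rimp_In A B) | apply (GWF_LRimp_In A B C E')]; assumption.
Qed.

Lemma complete_compound_l x G D :
  (forall G' D', weight G' + weight D' < weight (x :: G) + weight D -> complete_for K G' D') ->
  compound x -> complete_for K (x :: G) D.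
Proof.
  intros IH Hx W BG BD E; destruct W as [WG WD].
  destruct x as [| | X Y | X Y | | A B]; cbn in Hx; try contradiction.
  - apply g_Land; [solve_Forall |].
    apply IH; [weight_lia | solve_Forall .. | now apply entails_and_l].
  - apply entails_or_l in E as [EX EY].
    apply g_Lor; [solve_Forall | apply IH .. ]; weight_lia || solve_Forall.
  - apply entails_mimp_l in E as [EA EB].
    apply g_Lmimp; [solve_Forall | apply IH .. ]; weight_lia || solve_Forall.
Qed.

Lemma complete_compound_r x G D :
  (forall G' D', weight G' + weight D' < weight G + weight (x :: D) -> complete_for K G' D') ->
  compound x -> complete_for K G (x :: D).
Proof.
  intros IH Hx W BG BD E; destruct W as [WG WD].
  destruct x as [| | X Y | X Y | | A B]; cbn in Hx; try contradiction.
  - apply entails_and_r in E as [EX EY].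
    apply g_Rand; [solve_Forall | apply IH .. ]; weight_lia || solve_Forall.
  - apply g_Ror; [solve_Forall |].
    apply IH; [weight_lia | solve_Forall .. | now apply entails_or_r].
  - apply g_Rmimp; [solve_Forall |].
    apply IH; [weight_lia | solve_Forall .. | now apply entails_mimp_r].
Qed.

Lemma complete_step : complete_at K.
Proof.
  intros G D; remember (weight G + weight D) as n eqn:Hn; revert G D Hn.
  induction n as [n IH] using lt_wf_ind; intros G D ->.
  destruct (pick_member compound G) as [(x & G0 & P & Hx) | LG].
  { apply (complete_for_perm K (x :: G0) D); [exact P | reflexivity |].
    apply complete_compound_l; [| exact Hx]; intros G' D' Hlt.
    apply (IH _ ltac:(rewrite <- (weight_perm _ _ P); exact Hlt) _ _ eq_refl). }
  destruct (pick_member compound D) as [(x & D0 & P & Hx) | LD].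
  { apply (complete_for_perm K G (x :: D0)); [reflexivity | exact P |].
    apply complete_compound_r; [| exact Hx]; intros G' D' Hlt.
    apply (IH _ ltac:(rewrite <- (weight_perm _ _ P); exact Hlt) _ _ eq_refl). }
  apply complete_literal; assumption.
Qed.

End Canonical.

Theorem GWF_complete K : complete_at K.
Proof. induction K as [K IH] using lt_wf_ind; apply complete_step, IH. Qed.

(** * Admissible rules *)

Ltac bound_depth_by L K := pose proof (max_depth_bounded L); set (K := max_depth L) in *.

Lemma GWF_incl G D G' D' : GWF G D -> incl G G' -> incl D D' -> wfseq G' D' -> GWF G' D'.
Proof.
  intros H HG HD W; bound_depth_by (G' ++ D') K; split_Forall.
  apply (GWF_complete K); [exact W | assumption .. |].
  eapply entails_incl; [apply GWF_entails; [exact H | ..] | exact HG | exact HD].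
  - apply (incl_Forall HG); assumption.
  - apply (incl_Forall HD); assumption.
Qed.

Lemma GWF_cut G D X : GWF G (X :: D) -> GWF (X :: G) D -> GWF G D.
Proof.
  intros H1 H2; bound_depth_by (X :: G ++ D) K.
  destruct (GWF_wfseq _ _ H1) as [WG _], (GWF_wfseq _ _ H2) as [_ WD].
  apply (GWF_complete K); [split; assumption | solve_Forall .. |].
  intros v Hv HG.
  pose proof (GWF_entails K _ _ H1 ltac:(solve_Forall) ltac:(solve_Forall) v Hv HG)
    as [HX | HD]%Exists_cons; [| exact HD].
  apply (GWF_entails K _ _ H2); [solve_Forall .. | exact Hv | now constructor].
Qed.

Lemma GWF_of_eval_imp X Y :
  is_frm2 X -> is_frm2 Y -> (forall v, eval v X -> eval v Y) -> GWF [X] [Y].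
Proof.
  intros WX WY H; bound_depth_by [X; Y] K.
  apply (GWF_complete K); [solve_Forall .. |].
  apply entails_single; intros v _ HX; apply H; solve_Forall.
Qed.

Lemma GWF_Rimp_inv A B : GWF [] [Imp A B] -> GWF [A] [B].
Proof.
  intro H; set (K := depth (Imp A B)).
  pose proof (canon_respects K (fun K' _ => GWF_complete K') [] (Forall_nil _) (Forall_nil _))
    as Hcanon.
  pose proof (GWF_entails K _ _ H ltac:(solve_Forall) ltac:(solve_Forall) _ Hcanon (Forall_nil _))
    as [[HAB | (C & E & [] & _)] | HE]%Exists_cons; [exact HAB | inversion HE].
Qed.

Lemma GWF_Lmimp_inv A B G D : GWF (MImp A B :: G) D -> GWF G (A :: D) /\ GWF (B :: G) D.
Proof.
  intro H; bound_depth_by (MImp A B :: G ++ D) K.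
  destruct (GWF_wfseq _ _ H) as [W WD].
  pose proof (GWF_entails K _ _ H ltac:(solve_Forall) ltac:(solve_Forall))
    as [EA EB]%entails_mimp_l.
  split; apply (GWF_complete K); solve_Forall.
Qed.

(** * From WF_N2 to the sequent calculus *)

Lemma WF_frm F : WF F -> is_frm F.
Proof. induction 1; cbn in *; tauto. Qed.

Lemma GWF_of_WF F : WF F -> GWF [] [F].
Proof.
  induction 1; repeat match goal with H : WF _ |- _ => apply WF_frm in H end.
  all: try (apply g_Rimp; [solve_Forall | apply GWF_of_eval_imp; [solve_Forall .. | cbn; tauto]]).
  - apply (GWF_cut _ _ A); [eapply GWF_incl; [exact IHWF1 | ..] | apply GWF_Rimp_inv, IHWF2].
    all: destruct (GWF_wfseq _ _ IHWF2); solve_Forall; intros z Hz; cbn in *; tauto.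
  - apply g_Rimp; [destruct (GWF_wfseq _ _ IHWF); solve_Forall |].
    apply (GWF_incl _ _ _ _ IHWF); [intros z [] | apply incl_refl | solve_Forall].
  - apply GWF_Rimp_inv in IHWF1, IHWF2.
    destruct (GWF_wfseq _ _ IHWF1), (GWF_wfseq _ _ IHWF2); split_Forall.
    apply g_Rimp; [solve_Forall |]; apply (GWF_cut _ _ B);
      [apply (GWF_incl _ _ _ _ IHWF1) | apply (GWF_incl _ _ _ _ IHWF2)];
      solve_Forall; intros z Hz; cbn in *; tauto.
  - apply GWF_Rimp_inv in IHWF1, IHWF2.
    destruct (GWF_wfseq _ _ IHWF1), (GWF_wfseq _ _ IHWF2).
    apply g_Rimp; [solve_Forall |]; apply g_Rand; solve_Forall.
  - apply GWF_Rimp_inv in IHWF1, IHWF2.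
    destruct (GWF_wfseq _ _ IHWF1), (GWF_wfseq _ _ IHWF2).
    apply g_Rimp; [solve_Forall |]; apply g_Lor; solve_Forall.
  - destruct (GWF_wfseq _ _ IHWF1), (GWF_wfseq _ _ IHWF2).
    apply g_Rand; solve_Forall.
  - apply GWF_Rimp_inv in IHWF1, IHWF2.
    destruct (GWF_wfseq _ _ IHWF1), (GWF_wfseq _ _ IHWF2).
    apply g_Rimp; [solve_Forall |]; apply g_LRimp; [solve_Forall |].
    bound_depth_by [C; Or A D; And C B; D; MImp A B] K.
    pose proof (GWF_entails K _ _ IHWF1 ltac:(solve_Forall) ltac:(solve_Forall)) as E1.
    pose proof (GWF_entails K _ _ IHWF2 ltac:(solve_Forall) ltac:(solve_Forall)) as E2.
    rewrite entails_single in E1, E2.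
    apply (GWF_complete K); [solve_Forall .. |].
    apply entails_single; intros v Hv HG; split_Forall.
    destruct (E1 v Hv ltac:(solve_Forall)); [| assumption].
    apply (E2 v Hv); solve_Forall.
Qed.

(** * From the sequent calculus to WF_N2 *)

Lemma WF_Top : WF Top.
Proof. apply ax_id; exact I. Qed.

Fixpoint conj_list (l : list form) : form :=
  match l with [] => Top | x :: l => And x (conj_list l) end.

Fixpoint disj_list (l : list form) : form :=
  match l with [] => Bot | x :: l => Or x (disj_list l) end.

Lemma conj_list_frm l : Forall is_frm l -> is_frm (conj_list l).
Proof. induction 1; cbn; auto. Qed.

Lemma disj_list_frm l : Forall is_frm l -> is_frm (disj_list l).
Proof. induction 1; cbn; auto. Qed.

Lemma conj_list_In l x : Forall is_frm l -> In x l -> WF (Imp (conj_list l) x).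
Proof.
  induction 1 as [| y l Hy Hl IH]; [intros [] |]; intros [<- | Hx]; cbn.
  - apply ax_and1; [assumption | apply conj_list_frm, Hl].
  - eapply r_trans; [apply ax_and2 | apply IH, Hx]; [assumption | apply conj_list_frm, Hl].
Qed.

Lemma disj_list_In l x : Forall is_frm l -> In x l -> WF (Imp x (disj_list l)).
Proof.
  induction 1 as [| y l Hy Hl IH]; [intros [] |]; intros [<- | Hx]; cbn.
  - apply ax_or1; [assumption | apply disj_list_frm, Hl].
  - eapply r_trans; [apply IH, Hx | apply ax_or2]; [assumption | apply disj_list_frm, Hl].
Qed.

Lemma conj_list_intro X l :
  is_frm X -> Forall (fun y => WF (Imp X y)) l -> WF (Imp X (conj_list l)).
Proof. intros HX; induction 1; cbn; [apply r_k, WF_Top; exact HX | apply r_andI; assumption]. Qed.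

Lemma disj_list_elim X l :
  is_frm X -> Forall (fun y => WF (Imp y X)) l -> WF (Imp (disj_list l) X).
Proof. intros HX; induction 1; cbn; [apply ax_bot, HX | apply r_orE; assumption]. Qed.

Lemma conj_list_incl l l' :
  Forall is_frm l -> Forall is_frm l' -> incl l' l -> WF (Imp (conj_list l) (conj_list l')).
Proof.
  intros Hl Hl' Hincl; apply conj_list_intro; [apply conj_list_frm, Hl |].
  apply Forall_forall; intros x Hx; apply conj_list_In, Hincl, Hx; exact Hl.
Qed.

Lemma disj_list_incl l l' :
  Forall is_frm l -> Forall is_frm l' -> incl l l' -> WF (Imp (disj_list l) (disj_list l')).
Proof.
  intros Hl Hl' Hincl; apply disj_list_elim; [apply disj_list_frm, Hl' |].
  apply Forall_forall; intros x Hx; apply disj_list_In, Hincl, Hx; exact Hl'.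
Qed.

Lemma WF_and_assoc X Y Z :
  is_frm X -> is_frm Y -> is_frm Z -> WF (Imp (And (And X Y) Z) (And X (And Y Z))).
Proof.
  intros; repeat apply r_andI.
  - eapply r_trans; apply ax_and1; cbn; auto.
  - eapply r_trans; [apply ax_and1 | apply ax_and2]; cbn; auto.
  - apply ax_and2; cbn; auto.
Qed.

Lemma WF_or_assoc X Y Z :
  is_frm X -> is_frm Y -> is_frm Z -> WF (Imp (Or X (Or Y Z)) (Or (Or X Y) Z)).
Proof.
  intros; repeat apply r_orE.
  - eapply r_trans; apply ax_or1; cbn; auto.
  - eapply r_trans; [apply ax_or2 | apply ax_or1]; cbn; auto.
  - apply ax_or2; cbn; auto.
Qed.

Lemma WF_and_comm X Y : is_frm X -> is_frm Y -> WF (Imp (And X Y) (And Y X)).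
Proof. intros; apply r_andI; [apply ax_and2 | apply ax_and1]; assumption. Qed.

Lemma WF_or_mono X Y X' Y' :
  is_frm X' -> is_frm Y' -> WF (Imp X X') -> WF (Imp Y Y') -> WF (Imp (Or X Y) (Or X' Y')).
Proof. intros; apply r_orE; eapply r_trans; eauto using ax_or1, ax_or2. Qed.

Lemma WF_distr_r X Y Z :
  is_frm X -> is_frm Y -> is_frm Z -> WF (Imp (And (Or X Y) Z) (Or (And X Z) (And Y Z))).
Proof.
  intros; eapply r_trans; [apply WF_and_comm; cbn; auto |].
  eapply r_trans; [apply ax_dist; auto |].
  apply WF_or_mono; cbn; auto; apply WF_and_comm; assumption.
Qed.

Lemma WF_and_or_distr X Y Z :
  is_frm X -> is_frm Y -> is_frm Z -> WF (Imp (And (Or X Z) (Or Y Z)) (Or (And X Y) Z)).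
Proof.
  intros; eapply r_trans; [apply ax_dist; cbn; auto |]; apply r_orE.
  - eapply r_trans; [apply WF_and_comm; cbn; auto |].
    eapply r_trans; [apply ax_dist; cbn; auto |]; apply r_orE.
    + eapply r_trans; [apply WF_and_comm; auto | apply ax_or1; cbn; auto].
    + eapply r_trans; [apply ax_and2; auto | apply ax_or2; cbn; auto].
  - eapply r_trans; [apply ax_and2; cbn; auto | apply ax_or2; cbn; auto].
Qed.

Lemma WF_conj_list_single A : is_frm A -> WF (Imp A (conj_list [A])).
Proof. intro HA; apply conj_list_intro; [| constructor; [apply ax_id |]]; auto. Qed.

Lemma WF_disj_list_single B : is_frm B -> WF (Imp (disj_list [B]) B).
Proof. intro HB; apply disj_list_elim; [| constructor; [apply ax_id |]]; auto. Qed.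

Lemma WF_Rimp_of_lists A B :
  is_frm A -> is_frm B -> WF (Imp (conj_list [A]) (disj_list [B])) -> WF (Imp A B).
Proof.
  intros HA HB H; eapply r_trans; [apply WF_conj_list_single, HA |].
  eapply r_trans; [exact H | apply WF_disj_list_single, HB].
Qed.

Lemma WF_N2_of_lists A B C D :
  is_frm A -> is_frm B -> is_frm C -> is_frm D ->
  WF (Imp (conj_list [A]) (disj_list [C; B])) -> WF (Imp (conj_list [D; A]) (disj_list [B])) ->
  WF (Imp (Imp C D) (Imp A B)).
Proof.
  intros HA HB HC HD HCB HDB; apply r_N2.
  - eapply r_trans; [apply WF_conj_list_single, HA |].
    eapply r_trans; [exact HCB |].
    apply disj_list_elim; solve_Forall; [apply ax_or1 | apply ax_or2]; assumption.
  - apply (r_trans _ (conj_list [D; A])).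
    + apply conj_list_intro; solve_Forall; [apply ax_and2 | apply ax_and1]; assumption.
    + eapply r_trans; [exact HDB | apply WF_disj_list_single, HB].
Qed.

(* A cut-free derivation of a sequent over Frm stays within Frm, except for the premise
   of LR->, which is inverted into two Frm-sequents of smaller depth. *)
Lemma WF_of_GWF K G D :
  Forall is_frm G -> Forall is_frm D -> bounded K G -> bounded K D -> GWF G D ->
  WF (Imp (conj_list G) (disj_list D)).
Proof.
  revert G D; induction K as [K IHK] using lt_wf_ind.
  intros G D FG FD BG BD H; revert FG FD BG BD.
  induction H; intros FG FD BG BD.
  - assert (Forall is_frm G) by (rewrite H0; exact FG).
    assert (Forall is_frm D) by (rewrite H1; exact FD).
    apply (r_trans _ (conj_list G)); [apply conj_list_incl; auto; apply Permutation_incl, H0 |].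
    apply (r_trans _ (disj_list D)); [apply IHGWF; auto; [rewrite H0 | rewrite H1]; assumption |].
    apply disj_list_incl; auto; apply Permutation_incl, H1.
  - apply (r_trans _ (Atom p)); [apply conj_list_In | apply disj_list_In]; auto; now left.
  - apply (r_trans _ Bot); [apply conj_list_In; auto; now left |].
    apply ax_bot, disj_list_frm, FD.
  - split_Forall. eapply r_trans; [apply WF_and_assoc; auto using conj_list_frm |].
    apply IHGWF; solve_Forall.
  - split_Forall. eapply r_trans; [apply r_andI; [apply IHGWF1 | apply IHGWF2]; solve_Forall |].
    apply WF_and_or_distr; auto using disj_list_frm.
  - split_Forall. eapply r_trans; [apply WF_distr_r; auto using conj_list_frm |].
    apply r_orE; [apply IHGWF1 | apply IHGWF2]; solve_Forall.
  - split_Forall. eapply r_trans; [apply IHGWF; solve_Forall |].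
    apply WF_or_assoc; auto using disj_list_frm.
  - split_Forall; contradiction.
  - split_Forall; contradiction.
  - split_Forall; apply GWF_Lmimp_inv in H0 as [HCB HDB].
    apply (r_trans _ (Imp C D)); [apply conj_list_In; [solve_Forall | now left] |].
    apply (r_trans _ (Imp A B)); [| apply disj_list_In; [solve_Forall | now left]].
    apply WF_N2_of_lists; try assumption; apply (IHK (K - 1)); solve_Forall.
  - split_Forall.
    apply (r_trans _ (Imp A B)); [| apply disj_list_In; [solve_Forall | now left]].
    apply r_k; [apply conj_list_frm, FG |].
    apply WF_Rimp_of_lists; try assumption; apply IHGWF; solve_Forall.
Qed.

(** * The single-succedent calculus *)

Lemma GWF_of_GWFs G Z : GWFs G Z -> GWF G [Z].
Proof.
  induction 1; [apply (g_perm G [Z]); [assumption .. | reflexivity] | ..].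
  all: destruct H as [WG WZ].
  - apply g_id; solve_Forall.
  - apply g_bot; solve_Forall.
  - apply g_Land; solve_Forall.
  - apply g_Rand; solve_Forall.
  - apply g_Lor; solve_Forall.
  - apply g_Ror; [solve_Forall |].
    apply (GWF_incl _ _ _ _ IHGWFs);
      [apply incl_refl | intros z [<- | []]; now left | solve_Forall].
  - apply g_Ror; [solve_Forall |].
    apply (GWF_incl _ _ _ _ IHGWFs);
      [apply incl_refl | intros z [<- | []]; right; now left | solve_Forall].
  - (* s_Lmimp keeps [MImp A B] in its left premise: duplicate it, then contract. *)
    apply (GWF_incl (MImp A B :: MImp A B :: G) [Z]);
      [| intros z Hz; cbn in *; tauto | apply incl_refl | solve_Forall].
    apply g_Lmimp;
      [solve_Forall | apply (GWF_incl _ _ _ _ IHGWFs1) | apply (GWF_incl _ _ _ _ IHGWFs2)].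
    all: solve_Forall; intros z Hz; cbn in *; tauto.
  - apply g_Rmimp; solve_Forall.
  - apply g_LRimp; solve_Forall.
  - apply g_Rimp; solve_Forall.
Qed.

Definition s_complete_at (K : nat) : Prop :=
  forall G Z, Forall is_frm2 G -> is_frm Z -> bounded K G -> depth Z <= K ->
  entails K G [Z] -> GWFs G Z.

Section SingleCanonical.

Variable K : nat.
Hypothesis complete_below : forall K', K' < K -> s_complete_at K'.

Lemma GWFs_of_canon G Z :
  Forall is_frm2 G -> bounded K G -> is_frm Z -> depth Z <= K -> eval (canon G) Z -> GWFs G Z.
Proof.
  intros WG BG; induction Z as [p | | X IHX Y IHY | X IHX Y IHY | A _ B _ | A _ B _];
    cbn; intros FZ BZ EZ; try contradiction.
  - destruct (In_Permutation_cons _ _ EZ) as [G0 P].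
    apply (s_perm (Atom p :: G0)); [| exact P]; apply s_id.
    rewrite <- P in WG; solve_Forall.
  - apply s_Rand; [solve_Forall | apply IHX | apply IHY]; solve_Forall.
  - destruct EZ; [apply s_Rorl; [| apply IHX] | apply s_Rorr; [| apply IHY]]; solve_Forall.
  - destruct EZ as [HAB | (C & E & HCE & HAB)].
    + apply s_Rimp; [solve_Forall |].
      apply (complete_below (K - 1)); solve_Forall; apply GWF_entails; solve_Forall.
    + destruct (In_Permutation_cons _ _ HCE) as [G0 P].
      pose proof (proj1 (Forall_forall _ _) WG _ HCE) as WCE.
      pose proof (proj1 (Forall_forall _ _) BG _ HCE) as BCE.
      apply (s_perm (Imp C E :: G0)); [| exact P]; apply s_LRimp.
      * rewrite <- P in WG; solve_Forall.
      * apply (complete_below (K - 1)); solve_Forall; apply GWF_entails; solve_Forall.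
Qed.

(* Either some member of [G] is false in [canon G] -- then it is [Bot], a conjunction or
   disjunction to decompose, or [MImp C D] with [C] true, ready for s_Lmimp -- or [canon G]
   satisfies [G], hence [Z]. *)
Lemma s_complete_step : s_complete_at K.
Proof.
  intros G; remember (weight G) as n eqn:Hn; revert G Hn.
  induction n as [n IH] using lt_wf_ind; intros G -> Z WG FZ BG BZ E.
  destruct (pick_member (fun x => ~ eval (canon G) x) G) as [(x & G0 & P & Hx) | HG].
  - assert (HxG : In x G) by (eapply Permutation_in; [exact P | now left]).
    assert (Hw : weight G = outer_size x + weight G0)
      by (rewrite <- (weight_perm _ _ P); reflexivity).
    pose proof (entails_perm _ _ _ _ _ E (Permutation_sym P) (Permutation_refl _)) as E'.
    assert (WG' : Forall is_frm2 (x :: G0)) by (rewrite P; exact WG).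
    assert (BG' : bounded K (x :: G0)) by (rewrite P; exact BG).
    apply (s_perm (x :: G0)); [| exact P].
    destruct x as [p | | X Y | X Y | C D | C D];
      try (exfalso; apply Hx, (canon_true K (fun K' _ => GWF_complete K')); auto; cbn; congruence).
    + apply s_bot; solve_Forall.
    + apply s_Land; [solve_Forall |].
      apply (IH (weight (X :: Y :: G0)));
        [rewrite Hw; weight_lia | reflexivity | solve_Forall .. |].
      now apply entails_and_l.
    + apply entails_or_l in E' as [EX EY].
      apply s_Lor; [solve_Forall | apply (IH (weight (X :: G0))) | apply (IH (weight (Y :: G0)))];
        solve_Forall; rewrite Hw; weight_lia.
    + apply entails_mimp_l in E' as [_ ED].
      assert (HC : eval (canon G) C) by (apply NNPP; intro; apply Hx; cbn; tauto).
      apply s_Lmimp; [solve_Forall | apply (s_perm G); [| symmetry; exact P] |].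
      * apply GWFs_of_canon; solve_Forall.
      * apply (IH (weight (D :: G0))); solve_Forall.
        rewrite Hw; weight_lia.
  - assert (Htrue : Forall (eval (canon G)) G).
    { eapply Forall_impl; [| exact HG]; intros x; apply NNPP. }
    apply GWFs_of_canon; auto.
    apply (proj1 (entails_single _ _ _) E); [| exact Htrue].
    apply (canon_respects K (fun K' _ => GWF_complete K')); assumption.
Qed.

End SingleCanonical.

Theorem GWFs_complete K : s_complete_at K.
Proof. induction K as [K IH] using lt_wf_ind; apply s_complete_step, IH. Qed.

Lemma GWFs_of_GWF G Z : Forall is_frm2 G -> is_frm Z -> GWF G [Z] -> GWFs G Z.
Proof.
  intros WG FZ H; bound_depth_by (Z :: G) K.
  apply (GWFs_complete K); solve_Forall; apply GWF_entails; solve_Forall.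
Qed.

Lemma bigAnd_frm l : Forall is_frm l -> is_frm (bigAnd l).
Proof. induction 1 as [| x [| y l] Hx Hl IH]; cbn in *; auto. Qed.

Lemma bigAnd_In l x : Forall is_frm l -> In x l -> WF (Imp (bigAnd l) x).
Proof.
  induction 1 as [| y [| z l] Hy Hl IH]; intros Hx; [destruct Hx | ..].
  - destruct Hx as [<- | []]; apply ax_id, Hy.
  - change (bigAnd (y :: z :: l)) with (And y (bigAnd (z :: l))).
    pose proof (bigAnd_frm _ Hl).
    destruct Hx as [<- | Hx]; [apply ax_and1; assumption |].
    eapply r_trans; [apply ax_and2; assumption | apply IH, Hx].
Qed.

Lemma eval_bigAnd K v l :
  depth (bigAnd l) <= K -> respects K v -> Forall (eval v) l -> eval v (bigAnd l).
Proof.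
  intros BK Hv; induction 1 as [| x [| y l] Hx Hl IH]; cbn in *.
  - apply (proj1 Hv); [exact BK | apply g_bot; solve_Forall].
  - exact Hx.
  - split; [exact Hx | apply IH; lia].
Qed.

Lemma GWF_bigAnd l : Forall is_frm l -> GWF l [bigAnd l].
Proof.
  intro Hl; pose proof (bigAnd_frm l Hl); bound_depth_by (bigAnd l :: l) K.
  apply (GWF_complete K); [split; [apply Forall_frm_frm2, Hl | solve_Forall] | solve_Forall .. |].
  apply entails_single; intros v Hv; apply (eval_bigAnd K); solve_Forall.
Qed.

Lemma WF_bigAnd_conj_list l : Forall is_frm l -> WF (Imp (bigAnd l) (conj_list l)).
Proof.
  intro Hl; apply conj_list_intro; [apply bigAnd_frm, Hl |].
  apply Forall_forall; intros x Hx; apply bigAnd_In; assumption.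
Qed.

Lemma GWF_of_WF_bigAnd G A : Forall is_frm G -> WF (Imp (bigAnd G) A) -> GWF G [A].
Proof.
  intros FG H; apply GWF_of_WF, GWF_Rimp_inv in H.
  pose proof (Forall_frm_frm2 _ FG); destruct (GWF_wfseq _ _ H).
  apply (GWF_cut _ _ (bigAnd G));
    [apply (GWF_incl _ _ _ _ (GWF_bigAnd _ FG)) | apply (GWF_incl _ _ _ _ H)];
    solve_Forall; intros z Hz; cbn in *; tauto.
Qed.

Lemma WF_bigAnd_of_GWF G A : Forall is_frm G -> is_frm A -> GWF G [A] -> WF (Imp (bigAnd G) A).
Proof.
  intros FG FA H; bound_depth_by (A :: G) K.
  apply (r_trans _ _ _ (WF_bigAnd_conj_list _ FG)).
  apply (r_trans _ (disj_list [A])); [apply (WF_of_GWF K); solve_Forall |].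
  apply WF_disj_list_single, FA.
Qed.

Theorem corollary5p7 (Gamma : list form) (A : form) :
  Forall is_frm Gamma -> NoDup Gamma -> is_frm A ->
  (WF (Imp (bigAnd Gamma) A) <-> GWF Gamma [A]) /\
  (GWF Gamma [A] <-> GWFs Gamma A).
Proof.
  intros FG _ FA; split; split.
  - apply GWF_of_WF_bigAnd, FG.
  - apply WF_bigAnd_of_GWF; assumption.
  - apply GWFs_of_GWF; [apply Forall_frm_frm2, FG | exact FA].
  - apply GWF_of_GWFs.
Qed.
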